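(* For all $r,i\in\mathbb{Z}$, $\beta\in\Bbbk^*$ and $m\ge0$, the $(m+1)\times(m+1)$ matrix $\mathcal{A}_\beta^{r,i}(m)$ with entries $(\mathcal{A}_\beta^{r,i}(m))_{k,l}=c_\beta^{r,i}(k,l)$ for $0\le l\le k\le m$ and $0$ otherwise is a comatrix over $H$, i.e. $\Delta(c_{kl})=\sum_{p=0}^mc_{kp}\otimes c_{pl}$ and $\varepsilon(c_{kl})=\delta_{k,l}$ for all $0\le k,l\le m$, where $c_{kl}$ denotes the $(k,l)$ entry.
   Context: $\Bbbk$ is an algebraically closed field of characteristic $0$; $n,w$ positive integers, $\gamma$ a primitive $n$-th root of unity. $H=B(n,w,\gamma)$ is the Hopf algebra generated by $x^{\pm1},g,y$ with relations $xx^{-1}=x^{-1}x=1$, $xg=gx$, $xy=yx$, $yg=\gamma gy$, $y^n=1-x^w=1-g^n$, with $\Delta(x)=x\otimes x$, $\Delta(g)=g\otimes g$, $\Delta(y)=y\otimes g+1\otimes y$, $\varepsilon(x)=\varepsilon(g)=1$, $\varepsilon(y)=0$, $S(x)=x^{-1}$, $S(g)=g^{-1}$, $S(y)=-yg^{-1}$. The elements $c_\beta^{r,i}(k,l)\in H$ ($0\le l\le k$) are defined by $c_\beta^{r,i}(0,0)=x^rg^i$ and, for $k\ge0$: $c_\beta^{r,i}(k+1,0)=c_\beta^{r,i}(k,0)S(y)+\beta yc_\beta^{r,i}(k,0)S(g)$; for $0<l<k+1$, $c_\beta^{r,i}(k+1,l)=c_\beta^{r,i}(k,l)S(y)+\beta\gamma^{-l}yc_\beta^{r,i}(k,l)S(g)+c_\beta^{r,i}(k,l-1)S(g)$;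 $c_\beta^{r,i}(k+1,k+1)=c_\beta^{r,i}(k,k)S(g)$. *)

From HB Require Import structures.
From mathcomp Require Import all_boot all_order all_algebra.
Set Implicit Arguments. Unset Strict Implicit. Unset Printing Implicit Defensive.
Import Order.TTheory GRing.Theory Num.Theory.
Local Open Scope ring_scope.

(* Parameters: gam = gamma, beta, y, Sy = S(y), Sg = S(g), and
   c0 = c(0,0) = x^r g^i.  [cB ... k l] is c(k,l) for l <= k (and 0 for l > k). *)
Fixpoint cB (K : fieldType) (H : lalgType K) (gam beta : K) (y Sy Sg c0 : H)
    (k : nat) : nat -> H :=
  match k with
  | 0 => fun l => if l == 0%N then c0 else 0
  | k'.+1 => fun l =>
      let prev := cB gam beta y Sy Sg c0 k' in
      if l == 0%N then prev 0%N * Sy + beta *: (y * prev 0%N * Sg)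
      else if (l < k'.+1)%N then
        prev l * Sy + (beta * gam ^- l) *: (y * prev l * Sg) + prev l.-1 * Sg
      else if l == k'.+1 then prev k' * Sg
      else 0
  end.

From HB Require Import structures.
From mathcomp Require Import all_boot all_order all_algebra.
From mathcomp Require Import ring.
Set Implicit Arguments. Unset Strict Implicit. Unset Printing Implicit Defensive.
Import Order.TTheory GRing.Theory Num.Theory.
Local Open Scope ring_scope.

(* The key
   point is that g c(p,l) = gam^(l-p) c(p,l) g, so the term
   beta gam^(-l) y c(k,p) S(g) (x) g c(p,l) S(g) coming from
   Delta(y) = y (x) g + 1 (x) y equals beta gam^(-p) y c(k,p) S(g) (x) c(p,l),
   which is the term the recursion for c(k+1,p) needs.  The remaining terms
   c(k,p) S(g) (x) c(p+1,l) become c(k,p-1) S(g) (x) c(p,l) after shifting p.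
   For the counit, eps(y) = eps(S(y)) = 0 leaves only eps(c(k,l-1)). *)

Section Recursion.
Variables (K : fieldType) (H : lalgType K) (gam beta : K) (y Sy Sg c0 : H).
Local Notation c := (cB gam beta y Sy Sg c0).

Definition cB_prev k l := if l is l'.+1 then c k l' else 0.

Lemma cB_gt k l : (k < l)%N -> c k l = 0.
Proof.
case: k => [|k]; first by case: l.
case: l => // l /= lt_kl.
by rewrite ltnS leqNgt (ltnW lt_kl) eqSS gtn_eqF.
Qed.

Lemma cBS k l : c k.+1 l =
  c k l * Sy + (beta * gam ^- l) *: (y * c k l * Sg) + cB_prev k l * Sg.
Proof.
case: l => [|l] /=; first by rewrite expr0 invr1 mulr1 mul0r addr0.
case: ltngtP => [//|lt_kl|[->]].
  by rewrite !cB_gt ?(ltnW lt_kl) // !(mul0r, mulr0, scaler0, addr0).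
by rewrite (@cB_gt k k.+1) // !(mul0r, mulr0, scaler0, add0r).
Qed.

End Recursion.

Section Comatrix.
Variables (K : fieldType) (H : algType K) (T : lalgType K).
Variables (gam beta : K) (y g Sy Sg c0 : H).
Local Notation c := (cB gam beta y Sy Sg c0).
Local Notation c_prev := (cB_prev gam beta y Sy Sg c0).
Hypotheses (gam_neq0 : gam != 0) (gSg : g * Sg = 1) (Sgg : Sg * g = 1).
Hypotheses (Sy_def : Sy = - (y * Sg)) (yg : y * g = gam *: (g * y)).
Hypothesis c0g : GRing.comm g c0.

Variables (tens : H -> H -> T) (Delta : H -> T) (eps : H -> K).
Hypotheses
  (tensDl : forall a b d, tens (a + b) d = tens a d + tens b d)
  (tensDr : forall a b d, tens a (b + d) = tens a b + tens a d)
  (tensZl : forall (s : K) a b, tens (s *: a) b = s *: tens a b)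
  (tensZr : forall (s : K) a b, tens a (s *: b) = s *: tens a b)
  (tensM : forall a b d e, tens (a * b) (d * e) = tens a d * tens b e).
Hypotheses
  (DeltaD : forall a b, Delta (a + b) = Delta a + Delta b)
  (DeltaZ : forall (s : K) a, Delta (s *: a) = s *: Delta a)
  (DeltaM : forall a b, Delta (a * b) = Delta a * Delta b)
  (Delta_y : Delta y = tens y g + tens 1 y)
  (Delta_Sg : Delta Sg = tens Sg Sg) (Delta_c0 : Delta c0 = tens c0 c0).
Hypotheses
  (epsD : forall a b, eps (a + b) = eps a + eps b)
  (epsZ : forall (s : K) a, eps (s *: a) = s * eps a)
  (epsM : forall a b, eps (a * b) = eps a * eps b)
  (eps_y : eps y = 0) (eps_Sg : eps Sg = 1) (eps_c0 : eps c0 = 1).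

Lemma g_y : g * y = gam^-1 *: (y * g).
Proof. by rewrite yg scalerA mulVf // scale1r. Qed.

Lemma g_Sy : g * Sy = gam^-1 *: (Sy * g).
Proof.
rewrite Sy_def mulrN mulNr -mulrA Sgg mulr1 mulrA g_y -scalerAl -mulrA gSg.
by rewrite mulr1 scalerN.
Qed.

Lemma cB_conj k l : g * c k l = (gam ^+ l / gam ^+ k) *: (c k l * g).
Proof.
have gamX_neq0 j : gam ^+ j != 0 by rewrite expf_neq0.
elim: k l => [|k IH] l.
  by case: l => [|l] /=; rewrite ?divr1 ?scale1r ?mulr0 ?mul0r ?scaler0.
rewrite cBS !mulrDr !mulrDl !scalerDr; congr (_ + _ + _).
- rewrite mulrA IH -scalerAl -(mulrA _ g Sy) g_Sy -scalerAr scalerA mulrA.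
  by congr (_ *: _); rewrite exprS; field; rewrite gamX_neq0 gam_neq0.
- rewrite -scalerAr !mulrA g_y -!scalerAl -(mulrA y g) IH -scalerAr -!scalerAl.
  rewrite !scalerA !mulrA -(mulrA _ g Sg) gSg mulr1 -(mulrA _ Sg g) Sgg mulr1.
  by congr (_ *: _); rewrite exprS; field; rewrite !gamX_neq0 gam_neq0.
- case: l => [|l] /=; first by rewrite !mul0r mulr0 scaler0.
  rewrite mulrA IH -scalerAl -(mulrA _ g Sg) gSg mulr1 -(mulrA _ Sg g) Sgg mulr1.
  by congr (_ *: _); rewrite !exprS; field; rewrite !gamX_neq0 gam_neq0.
Qed.

Lemma tens0l b : tens 0 b = 0.
Proof. by rewrite -(scale0r 0) tensZl scale0r. Qed.

Lemma tens0r a : tens a 0 = 0.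
Proof. by rewrite -(scale0r 0) tensZr scale0r. Qed.

Lemma Delta0 : Delta 0 = 0.
Proof. by rewrite -(scale0r 0) DeltaZ scale0r. Qed.

Lemma eps0 : eps 0 = 0.
Proof. by rewrite -(scale0r 0) epsZ mul0r. Qed.

Lemma Delta_Sy : Delta Sy = tens Sy 1 + tens Sg Sy.
Proof.
rewrite Sy_def -scaleN1r DeltaZ DeltaM Delta_y Delta_Sg mulrDl -!tensM.
by rewrite gSg mul1r tensZl tensZr scalerDr.
Qed.

Lemma eps_Sy : eps Sy = 0.
Proof. by rewrite Sy_def -scaleN1r epsZ epsM eps_y mul0r mulr0. Qed.

Lemma eps_cB k l : eps (c k l) = (k == l)%:R.
Proof.
elim: k l => [|k IH] l; first by case: l => [|l] /=; rewrite ?eps_c0 ?eps0.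
rewrite cBS !epsD !epsM epsZ !epsM eps_Sy eps_y eps_Sg.
by rewrite !(mulr0, mul0r, mulr1, add0r); case: l => [|l] /=; rewrite ?eps0 ?IH.
Qed.

Lemma sum_tens_cB_shift N k l : (k.+1 < N)%N ->
  \sum_(p < N) tens (c k p * Sg) (c p.+1 l) =
  \sum_(p < N) tens (c_prev k p * Sg) (c p l).
Proof.
case: N => [//|N] lt_kN.
rewrite big_ord_recr big_ord_recl /= [c k N]cB_gt // mul0r !tens0l addr0 add0r.
by apply: eq_bigr.
Qed.

Lemma Delta_cB N k l : (k < N)%N ->
  Delta (c k l) = \sum_(p < N) tens (c k p) (c p l).
Proof.
elim: k l => [|k IH] l lt_kN.
  case: N lt_kN => // N _.
  rewrite big_ord_recl big1 => [|p _]; last by rewrite tens0l.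
  by case: l => [|l]; rewrite /= ?Delta_c0 ?Delta0 ?tens0r addr0.
have {}IH l' : Delta (c k l') = \sum_(p < N) tens (c k p) (c p l').
  by apply: IH; exact: ltnW.
have Delta_prev : Delta (c_prev k l) = \sum_(p < N) tens (c k p) (c_prev p l).
  case: l => [|l] /=; last exact: IH.
  by rewrite Delta0 big1 // => p _; rewrite tens0r.
have expand : Delta (c k.+1 l) =
    \sum_(p < N) tens (c k p * Sy + (beta * gam ^- p) *: (y * c k p * Sg)) (c p l)
  + \sum_(p < N) tens (c k p * Sg) (c p.+1 l).
  rewrite cBS !DeltaD DeltaZ !DeltaM IH Delta_prev Delta_Sy Delta_Sg Delta_y.
  rewrite !(mulr_suml, mulr_sumr) scaler_sumr -!big_split; apply: eq_bigr => p _.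
  rewrite cBS !(mulrDl, mulrDr, tensDl, tensDr) -!tensM !scalerDr !tensZl !tensZr.
  rewrite mulr1 mul1r [g * c p l]cB_conj // -scalerAl -(mulrA _ g Sg) gSg mulr1.
  rewrite tensZr scalerA.
  have -> : beta / gam ^+ l * (gam ^+ l / gam ^+ p) = beta / gam ^+ p.
    by field; rewrite !expf_neq0.
  by rewrite /= addrACA -addrA.
rewrite expand sum_tens_cB_shift // -big_split.
by apply: eq_bigr => p _; rewrite cBS [RHS]tensDl.
Qed.

End Comatrix.

Section Grouplike.
Variables (R : nzRingType) (H : unitAlgType R) (T : nzRingType).
Variables (tens : H -> H -> T) (Delta : H -> T) (eps : H -> R).
Hypotheses
  (tensM : forall a b d e, tens (a * b) (d * e) = tens a d * tens b e)
  (tens11 : tens 1 1 = 1)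
  (DeltaM : forall a b, Delta (a * b) = Delta a * Delta b) (Delta1 : Delta 1 = 1)
  (epsM : forall a b, eps (a * b) = eps a * eps b) (eps1 : eps 1 = 1).

Definition grouplike u := Delta u = tens u u /\ eps u = 1.

Lemma grouplikeM u v : grouplike u -> grouplike v -> grouplike (u * v).
Proof.
by move=> [Du eu] [Dv ev]; rewrite /grouplike DeltaM epsM Du Dv eu ev tensM mulr1.
Qed.

Lemma grouplikeX u k : grouplike u -> grouplike (u ^+ k).
Proof.
move=> gu; elim: k => [|k IH]; last by rewrite exprS; apply: grouplikeM.
by rewrite /grouplike expr0 Delta1 tens11 eps1.
Qed.

Lemma grouplikeV u : u \is a GRing.unit -> grouplike u -> grouplike u^-1.
Proof.
move=> Uu [Du eu]; split.
  have DuV_Du : Delta u^-1 * tens u u = 1 by rewrite -Du -DeltaM mulVr // Delta1.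
  by rewrite -[LHS]mulr1 -tens11 -(mulrV Uu) tensM mulrA DuV_Du mul1r.
by rewrite -[LHS]mul1r -{1}eu -epsM mulrV.
Qed.

Lemma grouplikeXz u (z : int) :
  u \is a GRing.unit -> grouplike u -> grouplike (u ^ z).
Proof.
move=> Uu gu; case: z => k; first exact: grouplikeX.
by apply: grouplikeV; [rewrite unitrX | apply: grouplikeX].
Qed.

End Grouplike.

Theorem corollary3p13
  (K : closedFieldType) (Kchar : [pchar K] =i pred0)
  (n w : nat) (gam : K) (n_gt0 : (0 < n)%N) (w_gt0 : (0 < w)%N)
  (gam_prim : n.-primitive_root gam)
  (* the algebra H = B(n,w,gam), generated by x^{+-1}, g, y *)
  (H : unitAlgType K) (x g y : H)
  (x_unit : x \is a GRing.unit)
  (rel_xg : x * g = g * x) (rel_xy : x * y = y * x)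
  (rel_yg : y * g = gam *: (g * y))
  (rel_yn_x : y ^+ n = 1 - x ^+ w) (rel_yn_g : y ^+ n = 1 - g ^+ n)
  (* H (x) H, with the (bilinear, multiplicative) tensor map *)
  (T : algType K) (tens : H -> H -> T)
  (tensDl : forall a b c, tens (a + b) c = tens a c + tens b c)
  (tensDr : forall a b c, tens a (b + c) = tens a b + tens a c)
  (tensZl : forall (s : K) a b, tens (s *: a) b = s *: tens a b)
  (tensZr : forall (s : K) a b, tens a (s *: b) = s *: tens a b)
  (tensM : forall a b c d, tens (a * b) (c * d) = tens a c * tens b d)
  (tens11 : tens 1 1 = 1)
  (* the coproduct: a unital algebra map H -> H (x) H *)
  (Delta : H -> T)
  (DeltaD : forall a b, Delta (a + b) = Delta a + Delta b)
  (DeltaZ : forall (s : K) a, Delta (s *: a) = s *: Delta a)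
  (DeltaM : forall a b, Delta (a * b) = Delta a * Delta b)
  (Delta1 : Delta 1 = 1)
  (Delta_x : Delta x = tens x x) (Delta_g : Delta g = tens g g)
  (Delta_y : Delta y = tens y g + tens 1 y)
  (* the counit: a unital algebra map H -> K *)
  (eps : H -> K)
  (epsD : forall a b, eps (a + b) = eps a + eps b)
  (epsZ : forall (s : K) a, eps (s *: a) = s * eps a)
  (epsM : forall a b, eps (a * b) = eps a * eps b)
  (eps1 : eps 1 = 1)
  (eps_x : eps x = 1) (eps_g : eps g = 1) (eps_y : eps y = 0)
  (r i : int) (beta : K) (beta_neq0 : beta != 0) (m : nat) :
  let Sy := - (y * g^-1) in
  let Sg := g^-1 in
  let c := cB gam beta y Sy Sg (x ^ r * g ^ i) in
  let A : 'M[H]_(m.+1) :=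
    \matrix_(k < m.+1, l < m.+1) (if (l <= k)%N then c k l else 0) in
  (forall k l : 'I_m.+1, Delta (A k l) = \sum_(p < m.+1) tens (A k p) (A p l)) /\
  (forall k l : 'I_m.+1, eps (A k l) = (k == l)%:R).
Proof.
move=> Sy Sg c A.
have gam_neq0 : gam != 0 by rewrite (prim_root_eq0 gam_prim) -lt0n.
have g_unit : g \is a GRing.unit.
  have gn_xw : g ^+ n = x ^+ w.
    by apply: oppr_inj; apply: (addrI 1); rewrite -rel_yn_g.
  by rewrite -(unitrX_pos g n_gt0) gn_xw unitrX.
have gSg : g * Sg = 1 by rewrite mulrV.
have Sgg : Sg * g = 1 by rewrite mulVr.
have [Delta_Sg eps_Sg] : grouplike tens Delta eps Sg by apply: grouplikeV.
have [Delta_c0 eps_c0] : grouplike tens Delta eps (x ^ r * g ^ i).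
  by apply: grouplikeM => //; apply: grouplikeXz.
have c0g : GRing.comm g (x ^ r * g ^ i).
  by apply: commrM; apply: commrXz; [exact: esym rel_xg | exact: commr_refl].
have A_c k l : A k l = c k l by rewrite mxE; case: leqP => // lt_kl; rewrite /c cB_gt.
split=> k l; rewrite A_c.
  under eq_bigr do rewrite !A_c.
  by apply: (@Delta_cB _ _ _ _ _ _ g) => //; exact: ltn_ord.
exact: eps_cB.
Qed.
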